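(* Let $\beta=0$ and $\alpha=n/m$ with $n,m$ positive integers, $\gcd(n,m)=1$. For $p_0\in[0,1)$ let $\Lambda(\alpha,p_0)=\bigcup_{k=0}^{m-1}\{(q,(p_0+k\alpha)\bmod 1): q\in[0,1)\}$, a union of $m$ distinct horizontal circles. Then: (i) $\phi(\Lambda(\alpha,p_0))=\Lambda(\alpha,p_0)$ and $\phi$ restricted to $\Lambda(\alpha,p_0)$ is an interval exchange transformation, i.e. a bijection of $\Lambda(\alpha,p_0)$ for which there is a partition of $\Lambda(\alpha,p_0)$ into finitely many half-open horizontal segments such that on each segment $\phi(q,p)=(q+a,p+b)\pmod 1$ for constants $(a,b)$ depending on the segment; (ii) if $p_0\in\mathbb{Q}$ then there exists an integer $k=k(\alpha,p_0)\ge1$ such that $\phi^k$ restricted to $\Lambda(\alpha,p_0)$ is the identity; (iii) if $p_0\notin\mathbb{Q}$ then $\phi$ restricted to $\Lambda(\alpha,p_0)$ has no periodic points.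
   Context: $\mathbb{T}^2=[0,1)^2$ with addition modulo 1. Define $\theta(q)=1$ for $q\in[0,\tfrac12)$ and $\theta(q)=-1$ for $q\in[\tfrac12,1)$. The triangle map with parameters $(\alpha,\beta)$ is $\phi(q,p)=(q+p+\alpha\theta(q)+\beta,\ p+\alpha\theta(q)+\beta)\pmod 1$; here $\beta=0$, so $\phi(q,p)=(q+p+\alpha\theta(q),\ p+\alpha\theta(q))\pmod 1$. *)

From Stdlib Require Import Reals Lra Lia ZArith.
Open Scope R_scope.

(* fractional part: x mod 1, in [0,1).  Int_part x = up x - 1 = floor x. *)
Definition frac (x : R) : R := x - IZR (Int_part x).

Definition theta (q : R) : R := if Rlt_dec q (1/2) then 1 else -1.

(* the triangle map with beta = 0, points of T^2 represented in [0,1)^2 *)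
Definition phi (alpha : R) (x : R * R) : R * R :=
  let (q, p) := x in
  (frac (q + p + alpha * theta q), frac (p + alpha * theta q)).

Definition Lambda (m : nat) (alpha p0 : R) (x : R * R) : Prop :=
  0 <= fst x < 1 /\
  exists k : nat, (k < m)%nat /\ snd x = frac (p0 + INR k * alpha).

Definition hseg (q1 q2 p : R) (x : R * R) : Prop :=
  q1 <= fst x < q2 /\ snd x = p.

Definition IET_on (f : R * R -> R * R) (S : R * R -> Prop) : Prop :=
  (forall x, S x -> S (f x)) /\
  (forall x y, S x -> S y -> f x = f y -> x = y) /\
  (forall y, S y -> exists x, S x /\ f x = y) /\
  exists (N : nat) (q1 q2 p a b : nat -> R),
    (forall i, (i < N)%nat -> 0 <= q1 i < q2 i /\ q2 i <= 1) /\
    (forall i x, (i < N)%nat -> hseg (q1 i) (q2 i) (p i) x -> S x) /\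
    (forall x, S x -> exists i, (i < N)%nat /\ hseg (q1 i) (q2 i) (p i) x /\
        forall j, (j < N)%nat -> hseg (q1 j) (q2 j) (p j) x -> j = i) /\
    (forall i x, (i < N)%nat -> hseg (q1 i) (q2 i) (p i) x ->
        f x = (frac (fst x + a i), frac (snd x + b i))).

Definition is_rational (x : R) : Prop :=
  exists (a b : Z), b <> 0%Z /\ x = IZR a / IZR b.

From Stdlib Require Import Reals Lra Lia ZArith Arith Classical.
Open Scope R_scope.

(* Points of the torus are represented in [0,1)^2 and reduction mod 1 is
   [frac].  Since theta only takes the integer values 1 and -1, one step of
   phi sends (q, p0 + j alpha) to (q + p0 + J alpha, p0 + j' alpha) mod 1
   with integers J, j'; iterating gives the orbit formula [orbit_formula]:
   the t-th iterate of (q, p0 + j alpha) is (q + t p0 + J alpha,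
   p0 + j' alpha) mod 1.  For alpha = n/m with gcd(n,m) = 1 the heights
   (p0 + j alpha) mod 1, j in Z, are exactly the m distinct heights
   h_k = (p0 + k alpha) mod 1, k < m ([height_index], [heights_distinct]).
   From this:
   - (i)  phi maps Lambda into itself and onto itself, is injective on
     [0,1)^2, and translates each half circle [0,1/2) x {h_k},
     [1/2,1) x {h_k} rigidly, which gives the interval exchange structure;
   - (ii) if p0 = a/b, the orbit formula confines every orbit in Lambda to
     a grid of b m^2 points, so by pigeonhole and injectivity each point
     returns within N = b m^2 steps and N! is a common period;
   - (iii) a return phi^t x = x with t >= 1 forces t p0 in Z + alpha Z,
     hence p0 rational. *)

Lemma frac_range (x : R) : 0 <= frac x < 1.
Proof.
  unfold frac, Int_part. rewrite minus_IZR. destruct (archimed x).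
  change (IZR 1) with 1. lra.
Qed.

Lemma frac_unique (x f : R) (z : Z) : x = IZR z + f -> 0 <= f < 1 -> frac x = f.
Proof.
  intros Hx Hf. unfold frac, Int_part.
  assert (Hup : (z + 1)%Z = up x).
  { apply tech_up; rewrite plus_IZR; change (IZR 1) with 1; lra. }
  rewrite <- Hup. replace (z + 1 - 1)%Z with z by ring. lra.
Qed.

Lemma frac_shift (a b : R) (z : Z) : a = b + IZR z -> frac a = frac b.
Proof.
  intros Hab. apply frac_unique with (z := (Int_part b + z)%Z); [|apply frac_range].
  unfold frac. rewrite Hab, plus_IZR. ring.
Qed.

Lemma frac_id (x : R) : 0 <= x < 1 -> frac x = x.
Proof. intros Hx. apply frac_unique with (z := 0%Z); [simpl; ring | exact Hx]. Qed.

Lemma frac_eq (a b : R) : frac a = frac b -> exists z : Z, a = b + IZR z.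
Proof.
  unfold frac. intros H. exists (Int_part a - Int_part b)%Z. rewrite minus_IZR. lra.
Qed.

Lemma int_small (z : Z) : -1 < IZR z < 1 -> z = 0%Z.
Proof.
  intros [Hlo Hhi]. apply lt_IZR in Hhi. change (-1) with (IZR (-1)) in Hlo.
  apply lt_IZR in Hlo. lia.
Qed.

(* theta is integer valued; this is what keeps orbits on the lattice Z + alpha Z. *)
Lemma theta_integer (q : R) : exists s : Z, theta q = IZR s.
Proof. unfold theta. destruct (Rlt_dec q (1/2)); [exists 1%Z | exists (-1)%Z]; auto. Qed.

Lemma phi_eq (alpha q p : R) :
  phi alpha (q, p) = (frac (q + p + alpha * theta q), frac (p + alpha * theta q)).
Proof. reflexivity. Qed.

(* phi is injective on [0,1)^2: the second coordinate of the image determines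
   p up to an integer, and then the first coordinate determines q. *)
Lemma phi_injective (alpha q1 p1 q2 p2 : R) :
  0 <= q1 < 1 -> 0 <= p1 < 1 -> 0 <= q2 < 1 -> 0 <= p2 < 1 ->
  phi alpha (q1, p1) = phi alpha (q2, p2) -> (q1, p1) = (q2, p2).
Proof.
  intros Hq1 Hp1 Hq2 Hp2 H. rewrite !phi_eq in H. injection H as E1 E2.
  apply frac_eq in E1 as [z1 E1]. apply frac_eq in E2 as [z2 E2].
  assert (Hq : (z1 - z2 = 0)%Z) by (apply int_small; rewrite minus_IZR; lra).
  assert (Eq : q1 = q2).
  { replace z1 with z2 in E1 by lia. lra. }
  subst q2. assert (z2 = 0)%Z by (apply int_small; lra). subst z2.
  f_equal. simpl in E2. lra.
Qed.

Lemma orbit_formula (alpha p0 q : R) (j : Z) (t : nat) :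
  exists J j' : Z, Nat.iter t (phi alpha) (frac q, frac (p0 + IZR j * alpha)) =
    (frac (q + INR t * p0 + IZR J * alpha), frac (p0 + IZR j' * alpha)).
Proof.
  induction t as [|t [J [j' IH]]].
  - exists 0%Z, j. simpl. do 3 f_equal. ring.
  - rewrite Nat.iter_succ, IH, phi_eq.
    set (X := q + INR t * p0 + IZR J * alpha). set (Y := p0 + IZR j' * alpha).
    destruct (theta_integer (frac X)) as [s Hs]. rewrite Hs.
    exists (J + j' + s)%Z, (j' + s)%Z. f_equal.
    + apply frac_shift with (z := (- Int_part X - Int_part Y)%Z).
      unfold frac, X, Y. rewrite S_INR, !plus_IZR, minus_IZR, opp_IZR. ring.
    + apply frac_shift with (z := (- Int_part Y)%Z).
      unfold frac, Y. rewrite !plus_IZR, opp_IZR. ring.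
Qed.

(* Every lattice height p0 + j alpha mod 1 is one of the m heights
   p0 + k alpha mod 1 with k < m, because m alpha = n is an integer. *)
Lemma height_index (m n : nat) (alpha p0 : R) (j : Z) :
  (0 < m)%nat -> alpha = INR n / INR m ->
  exists k, (k < m)%nat /\ frac (p0 + IZR j * alpha) = frac (p0 + INR k * alpha).
Proof.
  intros Hm Hal. set (M := Z.of_nat m).
  assert (HM : (0 < M)%Z) by (unfold M; lia).
  destruct (Z.mod_pos_bound j M HM) as [Hr0 Hr1].
  exists (Z.to_nat (j mod M)). split; [lia|].
  apply frac_shift with (z := (j / M * Z.of_nat n)%Z).
  rewrite INR_IZR_INZ, Z2Nat.id by lia.
  rewrite (Z_div_mod_eq_full j M) at 1.
  rewrite Hal, !INR_IZR_INZ, mult_IZR, plus_IZR, mult_IZR. fold M.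
  assert (IZR M <> 0) by (apply not_0_IZR; lia). field. auto.
Qed.

(* The m heights are pairwise distinct: (b - a) alpha in Z with 0 < b - a < m
   would give m | (b - a) n, impossible as gcd(n, m) = 1. *)
Lemma heights_distinct_ordered (m n : nat) (alpha p0 : R) (a b : nat) :
  (0 < n)%nat -> Nat.gcd n m = 1%nat -> alpha = INR n / INR m -> (a < b < m)%nat ->
  frac (p0 + INR b * alpha) <> frac (p0 + INR a * alpha).
Proof.
  intros Hn Hg Hal Hab E. apply frac_eq in E as [z Hz].
  assert (Hm : INR m <> 0) by (apply not_0_INR; lia).
  assert (Ez : Z.of_nat ((b - a) * n) = (z * Z.of_nat m)%Z).
  { apply eq_IZR. rewrite mult_IZR, <- !INR_IZR_INZ, mult_INR, minus_INR by lia.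
    rewrite Hal in Hz.
    replace ((INR b - INR a) * INR n)
      with ((INR b - INR a) * (INR n / INR m) * INR m) by (field; auto).
    replace ((INR b - INR a) * (INR n / INR m)) with (IZR z) by lra. ring. }
  assert (Hz0 : (0 <= z)%Z) by nia.
  assert (Hdiv : Nat.divide m (n * (b - a))).
  { exists (Z.to_nat z). apply Nat2Z.inj. rewrite !Nat2Z.inj_mul, Z2Nat.id in * by lia. lia. }
  apply Nat.gauss in Hdiv; [| rewrite Nat.gcd_comm; exact Hg].
  apply Nat.divide_pos_le in Hdiv; lia.
Qed.

Lemma heights_distinct (m n : nat) (alpha p0 : R) (k1 k2 : nat) :
  (0 < n)%nat -> Nat.gcd n m = 1%nat -> alpha = INR n / INR m ->
  (k1 < m)%nat -> (k2 < m)%nat ->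
  frac (p0 + INR k1 * alpha) = frac (p0 + INR k2 * alpha) -> k1 = k2.
Proof.
  intros Hn Hg Hal H1 H2 E.
  destruct (Nat.lt_trichotomy k1 k2) as [Hlt|[Heq|Hgt]]; auto; exfalso.
  - apply (heights_distinct_ordered m n alpha p0 k1 k2); auto.
  - apply (heights_distinct_ordered m n alpha p0 k2 k1); auto.
Qed.

Lemma pigeonhole (N : nat) (P : nat -> nat -> Prop) :
  (forall t, (t <= N)%nat -> exists v, (v < N)%nat /\ P t v) ->
  exists t1 t2 v, (t1 < t2 <= N)%nat /\ P t1 v /\ P t2 v.
Proof.
  revert P. induction N as [|N IH]; intros P HP.
  - destruct (HP 0%nat (le_n 0)) as [v [Hv _]]. lia.
  - destruct (HP (S N) (le_n _)) as [v0 [Hv0 HPv0]].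
    destruct (classic (exists t, (t <= N)%nat /\ P t v0)) as [[t [Ht HPt]]|Hfresh].
    + exists t, (S N), v0. repeat split; auto; lia.
    + (* v0 is taken only at time S N, so value N can be relabelled as v0 *)
      destruct (IH (fun t w => P t w \/ (w = v0 /\ P t N)))
        as [t1 [t2 [w [Ht [H1 H2]]]]].
      * intros t Ht. destruct (HP t ltac:(lia)) as [v [Hv HPv]].
        assert (v <> v0) by (intros ->; apply Hfresh; eauto).
        destruct (Nat.eq_dec v N) as [->|HvN].
        -- exists v0. split; [lia | right; auto].
        -- exists v. split; [lia | left; auto].
      * destruct H1 as [H1|[Ew1 H1]], H2 as [H2|[Ew2 H2]]; try subst w.
        -- exists t1, t2, w. repeat split; auto; lia.
        -- exfalso. apply Hfresh. exists t1. split; [lia | exact H1].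
        -- exfalso. apply Hfresh. exists t2. split; [lia | exact H2].
        -- exists t1, t2, N. repeat split; auto; lia.
Qed.

Lemma divides_fact (d N : nat) : (1 <= d <= N)%nat -> exists c, fact N = (d * c)%nat.
Proof.
  induction N as [|N IH]; intros Hd; [lia|].
  destruct (Nat.eq_dec d (S N)) as [->|Hne].
  - exists (fact N). reflexivity.
  - destruct IH as [c Hc]; [lia|]. exists (S N * c)%nat.
    change (fact (S N)) with (S N * fact N)%nat. rewrite Hc. ring.
Qed.

Section ReturnTimes.

Variables (A : Type) (f : A -> A) (Dom : A -> Prop).
Hypothesis f_maps : forall x, Dom x -> Dom (f x).
Hypothesis f_injective : forall x y, Dom x -> Dom y -> f x = f y -> x = y.

Lemma iter_maps (t : nat) (x : A) : Dom x -> Dom (Nat.iter t f x).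
Proof. intros Hx. induction t; simpl; auto. Qed.

Lemma iter_injective (t : nat) (x y : A) :
  Dom x -> Dom y -> Nat.iter t f x = Nat.iter t f y -> x = y.
Proof.
  intros Hx Hy. induction t as [|t IH]; simpl; auto.
  intros E. apply IH, f_injective; auto; apply iter_maps; auto.
Qed.

Lemma iter_multiple (d c : nat) (x : A) :
  Nat.iter d f x = x -> Nat.iter (d * c) f x = x.
Proof.
  intros Hd. induction c as [|c IH]; [rewrite Nat.mul_0_r; reflexivity|].
  replace (d * S c)%nat with (d + d * c)%nat by ring.
  rewrite Nat.iter_add, IH. exact Hd.
Qed.

(* If the orbit of x only visits the N points grid 0, ..., grid (N-1), two
   of the times 0..N hit the same point and injectivity gives a return. *)
Lemma return_time (N : nat) (grid : nat -> A) (x : A) :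
  Dom x -> (forall t, exists v, (v < N)%nat /\ Nat.iter t f x = grid v) ->
  exists d, (1 <= d <= N)%nat /\ Nat.iter d f x = x.
Proof.
  intros Hx Hgrid.
  destruct (pigeonhole N (fun t v => Nat.iter t f x = grid v))
    as [t1 [t2 [v [Ht [E1 E2]]]]]; [intros t _; apply Hgrid|].
  exists (t2 - t1)%nat. split; [lia|].
  apply (iter_injective t1); [apply iter_maps; auto | auto |].
  rewrite <- Nat.iter_add. replace (t1 + (t2 - t1))%nat with t2 by lia. congruence.
Qed.

Lemma common_period (N : nat) :
  (forall x, Dom x -> exists d, (1 <= d <= N)%nat /\ Nat.iter d f x = x) ->
  forall x, Dom x -> Nat.iter (fact N) f x = x.
Proof.
  intros Hret x Hx. destruct (Hret x Hx) as [d [Hd Ed]].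
  destruct (divides_fact d N Hd) as [c ->]. apply iter_multiple, Ed.
Qed.

End ReturnTimes.

Lemma rational_positive_denominator (x : R) :
  is_rational x -> exists a b : Z, (0 < b)%Z /\ x = IZR a / IZR b.
Proof.
  intros [a [b [Hb Hx]]]. destruct (Z_lt_le_dec 0 b).
  - exists a, b. auto.
  - exists (- a)%Z, (- b)%Z. split; [lia|]. rewrite Hx, !opp_IZR.
    assert (IZR b <> 0) by (apply not_0_IZR; auto). field. auto.
Qed.

Section LambdaSet.

Variables (m n : nat) (p0 : R).
Hypothesis m_pos : (0 < m)%nat.
Let alpha := INR n / INR m.
Let L := Lambda m alpha p0.

Lemma Lambda_lattice (q : R) (j : Z) :
  0 <= q < 1 -> L (q, frac (p0 + IZR j * alpha)).
Proof.
  intros Hq. split; [exact Hq|].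
  destruct (height_index m n alpha p0 j m_pos eq_refl) as [k [Hk E]].
  exists k. auto.
Qed.

Lemma Lambda_normal_form (x : R * R) :
  L x -> exists j : Z, x = (frac (fst x), frac (p0 + IZR j * alpha)).
Proof.
  destruct x as [q p]. intros [Hq [k [_ Hp]]]. simpl in *.
  exists (Z.of_nat k). rewrite frac_id by exact Hq. rewrite <- INR_IZR_INZ, Hp. reflexivity.
Qed.

Lemma Lambda_iter (t : nat) (x : R * R) : L x -> L (Nat.iter t (phi alpha) x).
Proof.
  intros Hx. destruct (Lambda_normal_form x Hx) as [j Ex]. rewrite Ex.
  destruct (orbit_formula alpha p0 (fst x) j t) as [J [j' E]]. rewrite E.
  apply Lambda_lattice, frac_range.
Qed.

Lemma Lambda_phi (x : R * R) : L x -> L (phi alpha x).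
Proof. exact (Lambda_iter 1 x). Qed.

Lemma Lambda_phi_injective (x y : R * R) : L x -> L y -> phi alpha x = phi alpha y -> x = y.
Proof.
  destruct x as [q1 p1], y as [q2 p2]. intros [Hq1 [k1 [_ E1]]] [Hq2 [k2 [_ E2]]].
  simpl in *. subst p1 p2. apply phi_injective; auto; apply frac_range.
Qed.

(* Explicit preimage of (Q, h_k): move down (or up) one lattice height and
   back by the height in the first coordinate. *)
Lemma Lambda_phi_onto (y : R * R) : L y -> exists x, L x /\ phi alpha x = y.
Proof.
  destruct y as [Q P]. intros [HQ [k [Hk HP]]]. simpl in *. subst P.
  set (h := frac (p0 + INR k * alpha)). set (q := frac (Q - h)).
  destruct (theta_integer q) as [s Hs].
  set (Y := p0 + IZR (Z.of_nat k - s) * alpha).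
  exists (q, frac Y). split; [apply Lambda_lattice, frac_range|].
  rewrite phi_eq, Hs. f_equal.
  - rewrite <- (frac_id Q HQ).
    apply frac_shift with (z := (Int_part (p0 + INR k * alpha) - Int_part (Q - h)
                                 - Int_part Y)%Z).
    unfold q, h, Y, frac. rewrite !minus_IZR, !INR_IZR_INZ. ring.
  - unfold h. apply frac_shift with (z := (- Int_part Y)%Z).
    unfold frac, Y. rewrite !opp_IZR, !minus_IZR, !INR_IZR_INZ. ring.
Qed.

(* For rational p0 = a/b, by the orbit formula every iterate of a point of
   Lambda lies on the grid of first coordinates q + Z/(bm) and the m heights. *)
Definition rational_grid (q D : R) (v : nat) : R * R :=
  (frac (q + INR (v / m) / D), frac (p0 + INR (v mod m) * alpha)).

Lemma rational_orbit_grid (a b : Z) (x : R * R) (t : nat) :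
  (0 < b)%Z -> p0 = IZR a / IZR b -> L x ->
  exists v, (v < Z.to_nat (b * Z.of_nat m) * m)%nat /\
    Nat.iter t (phi alpha) x = rational_grid (fst x) (IZR (b * Z.of_nat m)) v.
Proof.
  intros Hb Hp Hx. set (D := (b * Z.of_nat m)%Z).
  assert (HD : (0 < D)%Z) by (unfold D; lia).
  destruct (Lambda_normal_form x Hx) as [j Ex].
  destruct x as [q p]. cbn [fst] in *. rewrite Ex.
  destruct (orbit_formula alpha p0 q j t) as [J [j' E]]. rewrite E.
  destruct (height_index m n alpha p0 j' m_pos eq_refl) as [k [Hk Ek]].
  set (Nt := (Z.of_nat t * a * Z.of_nat m + J * Z.of_nat n * b)%Z).
  destruct (Z.mod_pos_bound Nt D HD) as [Hr0 Hr1].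
  set (r := Z.to_nat (Nt mod D)).
  exists (r * m + k)%nat. split; [unfold r; nia|].
  unfold rational_grid. f_equal.
  - replace ((r * m + k) / m)%nat with r.
    2:{ rewrite Nat.div_add_l by lia. rewrite Nat.div_small by lia. lia. }
    apply frac_shift with (z := (Nt / D)%Z).
    assert (HN : IZR Nt = IZR D * IZR (Nt / D) + IZR (Nt mod D)).
    { rewrite <- mult_IZR, <- plus_IZR. f_equal. apply Z_div_mod_eq_full. }
    unfold r. rewrite (INR_IZR_INZ (Z.to_nat (Nt mod D))), Z2Nat.id by lia.
    replace (IZR (Nt mod D)) with (IZR Nt - IZR D * IZR (Nt / D)) by lra.
    unfold Nt, D, alpha. rewrite Hp, !INR_IZR_INZ, !plus_IZR, !mult_IZR.
    assert (IZR b <> 0) by (apply not_0_IZR; lia).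
    assert (IZR (Z.of_nat m) <> 0) by (apply not_0_IZR; lia).
    field. auto.
  - rewrite Ek. do 4 f_equal.
    rewrite Nat.add_comm, Nat.Div0.mod_add, Nat.mod_small; lia.
Qed.

Lemma Lambda_rational_periodic :
  is_rational p0 -> exists k : nat, (1 <= k)%nat /\
    forall x, L x -> Nat.iter k (phi alpha) x = x.
Proof.
  intros Hrat. destruct (rational_positive_denominator p0 Hrat) as [a [b [Hb Hp]]].
  set (N := (Z.to_nat (b * Z.of_nat m) * m)%nat).
  exists (fact N). split; [apply lt_O_fact|].
  apply (common_period _ (phi alpha) L N).
  intros x Hx.
  apply (return_time _ _ L Lambda_phi Lambda_phi_injective N
           (rational_grid (fst x) (IZR (b * Z.of_nat m))) x Hx).
  intros t. exact (rational_orbit_grid a b x t Hb Hp Hx).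
Qed.

(* (iii): by the orbit formula a return after t >= 1 steps gives
   t p0 + J n/m in Z, so p0 is rational. *)
Lemma Lambda_return_rational (x : R * R) (t : nat) :
  L x -> (1 <= t)%nat -> Nat.iter t (phi alpha) x = x -> is_rational p0.
Proof.
  intros Hx Ht Eret. destruct (Lambda_normal_form x Hx) as [j Ex].
  destruct x as [q p]. cbn [fst] in Ex. rewrite Ex in Eret.
  destruct (orbit_formula alpha p0 q j t) as [J [j' E]]. rewrite E in Eret.
  injection Eret as Eq _. apply frac_eq in Eq as [z Hz].
  exists (z * Z.of_nat m - J * Z.of_nat n)%Z, (Z.of_nat t * Z.of_nat m)%Z.
  split; [lia|].
  assert (Htp : INR t * p0 = IZR z - IZR J * alpha) by lra.
  assert (INR t <> 0) by (apply not_0_INR; lia).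
  assert (INR m <> 0) by (apply not_0_INR; lia).
  replace p0 with (INR t * p0 / INR t) by (field; auto).
  rewrite Htp. unfold alpha. rewrite !minus_IZR, !mult_IZR, <- !INR_IZR_INZ.
  field. auto.
Qed.

(* The interval exchange structure: Lambda is cut into the 2m half circles
   [0,1/2) x {h_k} (segment k, where theta = 1) and [1/2,1) x {h_k}
   (segment m + k, where theta = -1), k < m. *)
Definition seg_lo (i : nat) : R := if (i <? m)%nat then 0 else 1/2.
Definition seg_hi (i : nat) : R := if (i <? m)%nat then 1/2 else 1.
Definition seg_sign (i : nat) : R := if (i <? m)%nat then 1 else -1.
Definition seg_circle (i : nat) : nat := if (i <? m)%nat then i else (i - m)%nat.
Definition seg_height (i : nat) : R := frac (p0 + INR (seg_circle i) * alpha).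

Definition segment (i : nat) : R * R -> Prop := hseg (seg_lo i) (seg_hi i) (seg_height i).

Lemma phi_on_segment (i : nat) (x : R * R) :
  segment i x -> phi alpha x =
    (frac (fst x + (seg_height i + alpha * seg_sign i)), frac (snd x + alpha * seg_sign i)).
Proof.
  destruct x as [q p]. unfold segment, hseg, seg_lo, seg_hi, seg_sign. cbn [fst snd].
  intros [Hq ->]. rewrite phi_eq. unfold theta.
  destruct (Nat.ltb_spec i m); destruct (Rlt_dec q (1/2)); try lra;
    f_equal; f_equal; ring.
Qed.

Lemma segment_in_Lambda (i : nat) (x : R * R) : (i < 2 * m)%nat -> segment i x -> L x.
Proof.
  destruct x as [q p].
  unfold segment, hseg, seg_lo, seg_hi, seg_height, seg_circle, L, Lambda. cbn [fst snd].
  intros Hi [Hq Hp]. split; [destruct (Nat.ltb_spec i m); lra|].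
  eexists; split; [|exact Hp]. destruct (Nat.ltb_spec i m); lia.
Qed.

Hypothesis n_pos : (0 < n)%nat.
Hypothesis coprime_nm : Nat.gcd n m = 1%nat.

(* The segments partition Lambda; uniqueness uses that the heights are distinct. *)
Lemma Lambda_segment_partition (x : R * R) :
  L x -> exists i, (i < 2 * m)%nat /\ segment i x /\
    forall j, (j < 2 * m)%nat -> segment j x -> j = i.
Proof.
  destruct x as [q p]. intros [Hq [k [Hk Hp]]]. cbn [fst snd] in *.
  unfold segment, hseg, seg_lo, seg_hi, seg_height, seg_circle. cbn [fst snd].
  assert (Hcircle : forall c, (c < m)%nat -> p = frac (p0 + INR c * alpha) -> c = k).
  { intros c Hc Ec. apply (heights_distinct m n alpha p0); auto; congruence. }
  destruct (Rlt_dec q (1/2)) as [Hleft|Hright].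
  - exists k. rewrite (proj2 (Nat.ltb_lt k m) Hk).
    split; [lia|]. split; [split; [lra | exact Hp]|].
    intros j Hj. destruct (Nat.ltb_spec j m); intros [Hqj Hpj]; [|lra].
    apply Hcircle; auto.
  - exists (k + m)%nat. rewrite (proj2 (Nat.ltb_ge (k + m) m)) by lia.
    replace (k + m - m)%nat with k by lia.
    split; [lia|]. split; [split; [lra | exact Hp]|].
    intros j Hj. destruct (Nat.ltb_spec j m); intros [Hqj Hpj]; [lra|].
    assert (j - m = k)%nat by (apply Hcircle; auto; lia). lia.
Qed.

Lemma Lambda_IET : IET_on (phi alpha) L.
Proof.
  split; [exact Lambda_phi|]. split; [exact Lambda_phi_injective|].
  split; [exact Lambda_phi_onto|].
  exists (2 * m)%nat, seg_lo, seg_hi, seg_height,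
    (fun i => seg_height i + alpha * seg_sign i), (fun i => alpha * seg_sign i).
  split; [| split; [| split]].
  - intros i _. unfold seg_lo, seg_hi. destruct (Nat.ltb_spec i m); lra.
  - exact segment_in_Lambda.
  - exact Lambda_segment_partition.
  - intros i x _. exact (phi_on_segment i x).
Qed.

End LambdaSet.

Theorem lemma2 (n m : nat) (p0 : R) :
  (0 < n)%nat -> (0 < m)%nat -> Nat.gcd n m = 1%nat ->
  0 <= p0 < 1 ->
  let alpha := INR n / INR m in
  (* Lambda is a union of m distinct horizontal circles *)
  (forall k1 k2 : nat, (k1 < m)%nat -> (k2 < m)%nat -> k1 <> k2 ->
     frac (p0 + INR k1 * alpha) <> frac (p0 + INR k2 * alpha)) /\
  (* (i) *)
  (forall y, Lambda m alpha p0 y <-> exists x, Lambda m alpha p0 x /\ phi alpha x = y) /\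
  IET_on (phi alpha) (Lambda m alpha p0) /\
  (* (ii) *)
  (is_rational p0 -> exists k : nat, (1 <= k)%nat /\
     forall x, Lambda m alpha p0 x -> Nat.iter k (phi alpha) x = x) /\
  (* (iii) *)
  (~ is_rational p0 -> forall x, Lambda m alpha p0 x ->
     forall k : nat, (1 <= k)%nat -> Nat.iter k (phi alpha) x <> x).
Proof.
  intros Hn Hm Hg _ alpha.
  split.
  { intros k1 k2 H1 H2 Hne E.
    exact (Hne (heights_distinct m n alpha p0 k1 k2 Hn Hg eq_refl H1 H2 E)). }
  split.
  { intros y. split; [exact (Lambda_phi_onto m n p0 Hm y)|].
    intros [x [Hx <-]]. exact (Lambda_phi m n p0 Hm x Hx). }
  split; [exact (Lambda_IET m n p0 Hm Hn Hg)|].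
  split; [exact (Lambda_rational_periodic m n p0 Hm)|].
  intros Hirr x Hx k Hk Ek. exact (Hirr (Lambda_return_rational m n p0 Hm x k Hx Hk Ek)).
Qed.
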